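(* For all integers $v\geq 1$ and $L\geq 0$, \[ \frac{1-q^3}{1-q}\sum_{n_1,\ldots,n_v\geq 0} \frac{q^{\sum_{i=1}^v (N_i+2)N_i+n_v}}{(q)_{n_1}\cdots(q)_{n_{v-1}}(q)_{2n_v+2}}\,\frac{(-1;q^3)_{n_v}}{(-1;q)_{n_v}}\,(1-q^{1+n_v})\,\frac{(q)_{2L}}{(q)_{L-1-N_1}} =\sum_{j=-\infty}^{\infty}\left(\frac{j}{3}\right) q^{\frac{(2v+1)j^2-3j}{2}-(v-1)} {2L \brack L+j}_q, \] where $N_i=n_i+n_{i+1}+\cdots+n_v$ for $i=1,\ldots,v$ (for $v=1$ the product $(q)_{n_1}\cdots(q)_{n_{v-1}}$ is empty).
   Context: For a variable $a$ and integer $n\ge 0$, $(a;q)_n=(1-a)(1-aq)\cdots(1-aq^{n-1})$, and $(q)_n=(q;q)_n$; by convention $1/(q)_n=0$ for negative integers $n$. The $q$-binomial coefficient is ${A \brack B}_q=\frac{(q;q)_A}{(q;q)_B(q;q)_{A-B}}$ if $0\le B\le A$ are integers, and $0$ otherwise. $\left(\frac{j}{3}\right)$ is the Legendre symbol modulo 3: it equals $1$ if $j\equiv 1 \pmod 3$, $-1$ if $j\equiv -1\pmod 3$, and $0$ if $3\mid j$. *)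

From HB Require Import structures.
From mathcomp Require Import all_boot all_order all_algebra.
Set Implicit Arguments. Unset Strict Implicit. Unset Printing Implicit Defensive.
Import Order.TTheory GRing.Theory Num.Theory.
Local Open Scope ring_scope.

Section QDefs.
Variable R : numFieldType.
Implicit Types (q a : R).

Definition qpoch a q (n : nat) : R := \prod_(i < n) (1 - a * q ^+ i).

Definition qfac q (n : nat) : R := qpoch q q n.

(* 1/(q)_n for an integer n, with the convention 1/(q)_n = 0 for n < 0 *)
Definition qfac_inv q (n : int) : R :=
  match n with Posz m => (qfac q m)^-1 | Negz _ => 0 end.

Definition qbinom q (A B : int) : R :=
  if (0 <= B) && (B <= A) then
    qfac q `|A|%N / (qfac q `|B|%N * qfac q `|A - B|%N)
  else 0.

Definition leg3 (j : int) : R :=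
  if (j %% 3)%Z == 1 then 1 else if (j %% 3)%Z == 2 then -1 else 0.

(* n_1..n_v given as a sequence s with n_{i+1} = nth 0 s i;
   N_{i+1} = n_{i+1} + ... + n_v *)
Definition bigN (v : nat) (s : seq nat) (i : nat) : nat :=
  (\sum_(i <= k < v) nth 0 s k)%N.

Definition lhs_term q (v L : nat) (s : seq nat) : R :=
  let nv := nth 0%N s v.-1 in
  let e := (\sum_(i < v) (bigN v s i + 2) * bigN v s i + nv)%N in
  q ^+ e
  / ((\prod_(i < v.-1) qfac q (nth 0%N s i)) * qfac q (2 * nv + 2))
  * (qpoch (-1) (q ^+ 3) nv / qpoch (-1) q nv)
  * (1 - q ^+ (1 + nv))
  * qfac q (2 * L)
  * qfac_inv q (L%:Z - 1 - (bigN v s 0)%:Z).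

Definition rhs_term q (v L : nat) (j : int) : R :=
  leg3 j * q ^ ((((2 * v + 1)%:Z * j ^+ 2 - 3 * j) %/ 2)%Z - (v%:Z - 1))
  * qbinom q (2 * L)%:Z (L%:Z + j).

End QDefs.

(* Relative to a = q^2 the pair
     alpha_r = (1-q)/(1-q^3) ((r+1)/3) q^e(r+1) (1 - q^(3(r+1))),   e(j) = (j^2 - 3j)/2 + 1,
     beta_n  = q^n (-1;q^3)_n / (-1;q)_n (1 - q^(n+1)) / (q)_(2n+2)
   is a Bailey pair: up to a constant, the defining sum for beta_n is the sum over j = 1 (mod 3)
   of q^e(j) (1 - q^(3j)) / ((q)_(n+1-j) (q)_(n+1+j)), and a creative-telescoping certificate
   shows that this sum obeys the same first-order recurrence in n as the closed form.
   Applying the Bailey lemma (both parameters at infinity) v times multiplies alpha_r by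
   q^(v(r^2+2r)), and unfolding the v-th iterate of beta at n = L - 1 gives exactly the v-fold
   sum on the left without its factor (q)_(2L).  The r-th term of the resulting sum over r is
   then the sum of the terms j = r+1 and j = -(r+1) on the right. *)

From HB Require Import structures.
From mathcomp Require Import all_boot all_order all_algebra.
From mathcomp Require Import zify ring.
Import Order.TTheory GRing.Theory Num.Theory.
Set Implicit Arguments. Unset Strict Implicit. Unset Printing Implicit Defensive.
Local Open Scope ring_scope.

Arguments qfac : simpl never.
Arguments qfac_inv : simpl never.

Section BigSums.
Variable R : zmodType.
Implicit Types F : nat -> R.

Lemma sum_ord_vanishing_tail F a b : (a <= b)%N ->
    (forall x, (a <= x < b)%N -> F x = 0) ->
  \sum_(x < b) F x = \sum_(x < a) F x.
Proof.
move=> le_ab F0; rewrite -!(big_mkord xpredT) (big_cat_nat (leq0n a) le_ab) /=.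
by rewrite [X in _ + X]big1_seq ?addr0 // => x /andP[_]; rewrite mem_index_iota; apply: F0.
Qed.

Lemma sum_ord_vanishing_head F a b : (a <= b)%N ->
    (forall x, (x < a)%N -> F x = 0) ->
  \sum_(x < b) F x = \sum_(x < b - a) F (x + a)%N.
Proof.
move=> le_ab F0; rewrite -!(big_mkord xpredT) (big_cat_nat (leq0n a) le_ab) /=.
rewrite big1_seq ?add0r => [|x /andP[_]]; last by rewrite mem_index_iota => /andP[_]; apply: F0.
by rewrite -[in LHS](add0n a) big_addn big_mkord.
Qed.

Lemma sum_ord_triples F n :
  \sum_(r < 3 * n) F r = \sum_(k < n) (F (3 * k)%N + F (3 * k).+1 + F (3 * k).+2).
Proof.
elim: n => [|n IHn]; first by rewrite muln0 !big_ord0.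
by rewrite mulnS !addSn add0n !big_ord_recr /= IHn -!addrA.
Qed.

Lemma sum_centered (h : int -> R) n :
  \sum_(i < (2 * n).+1) h (i%:Z - n%:Z) = h 0 + \sum_(r < n) (h r.+1%:Z + h (- r.+1%:Z)).
Proof.
elim: n h => [|n IHn] h; first by rewrite big_ord1 big_ord0 !addr0.
rewrite (_ : (2 * n.+1).+1 = ((2 * n).+1).+2)%N; last by lia.
rewrite big_ord_recl big_ord_recr /=.
have shift (i : 'I_(2 * n).+1) : (bump 0 i)%:Z - n.+1%:Z = i%:Z - n%:Z by rewrite /bump; lia.
under eq_bigr => i _ do rewrite shift.
rewrite IHn big_ord_recr /= (_ : 0%N%:Z - n.+1%:Z = - n.+1%:Z); last by lia.
rewrite (_ : (bump 0 (2 * n).+1)%:Z - n.+1%:Z = n.+1%:Z); last by rewrite /bump; lia.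
by rewrite [LHS]addrC -!addrA.
Qed.

Lemma sum_tuple_cons (T : finType) v (G : v.+1.-tuple T -> R) :
  \sum_(t : v.+1.-tuple T) G t = \sum_(x : T) \sum_(t : v.-tuple T) G [tuple of x :: t].
Proof.
rewrite pair_bigA /= (reindex (fun p : T * v.-tuple T => [tuple of p.1 :: p.2])) //.
exists (fun t : v.+1.-tuple T => (thead t, [tuple of behead t])).
  by move=> [x t] _ /=; rewrite theadE; congr (_, _); exact: val_inj.
by move=> t _; apply: val_inj; rewrite /= [in RHS](tuple_eta t).
Qed.

Lemma sum_tuple0 (T : finType) (G : 0.-tuple T -> R) : \sum_(t : 0.-tuple T) G t = G [tuple].
Proof. by rewrite (big_pred1 [tuple]) // => t /=; apply/esym/eqP; exact: tuple0. Qed.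

End BigSums.

Lemma qpochS (R : numFieldType) (a x : R) n : qpoch a x n.+1 = qpoch a x n * (1 - a * x ^+ n).
Proof. by rewrite /qpoch big_ord_recr. Qed.

Section QFactorials.
Variables (R : numFieldType) (q : R).
Hypothesis q_not_root1 : forall k : nat, (0 < k)%N -> q ^+ k != 1.

Local Notation qfinv := (qfac_inv q).

Lemma onemX_neq0 k : (0 < k)%N -> 1 - q ^+ k != 0.
Proof. by move=> k_gt0; rewrite subr_eq0 eq_sym q_not_root1. Qed.

Lemma onem_neq0 : 1 - q != 0.
Proof. by rewrite -[q]expr1 onemX_neq0. Qed.

Lemma oneDX_neq0 k : 1 + q ^+ k != 0.
Proof.
case: k => [|k]; first by rewrite expr0 lt0r_neq0 // addr_gt0 ?ltr01.
have : q ^+ (k.+1 * 2) != 1 by rewrite q_not_root1 // muln_gt0.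
apply: contraNneq; rewrite exprM addrC => /eqP; rewrite addr_eq0 => /eqP->.
by rewrite sqrrN expr1n.
Qed.

Lemma qpoch_neg1_neq0 n : qpoch (-1) q n != 0.
Proof. by apply/prodf_neq0 => i _; rewrite mulN1r opprK oneDX_neq0. Qed.

Lemma qfacS n : qfac q n.+1 = qfac q n * (1 - q ^+ n.+1).
Proof. by rewrite /qfac qpochS exprS. Qed.

Lemma qfac0 : qfac q 0 = 1.
Proof. by rewrite /qfac /qpoch big_ord0. Qed.

Lemma qfac_neq0 n : qfac q n != 0.
Proof.
by elim: n => [|n IHn]; rewrite ?qfac0 ?oner_eq0 // qfacS mulf_neq0 ?onemX_neq0.
Qed.

Lemma qfac_invE (n : nat) : qfinv n = (qfac q n)^-1.
Proof. by []. Qed.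

Lemma qfac_inv0 : qfinv 0 = 1.
Proof. by rewrite qfac_invE qfac0 invr1. Qed.

Lemma qfac_inv_lt0 (n : int) : n < 0 -> qfinv n = 0.
Proof. by case: n. Qed.

Lemma qfac_invB1 (n : int) : qfinv (n - 1) = (1 - q ^ n) * qfinv n.
Proof.
case: n => [[|m]|m]; first by rewrite qfac_inv_lt0 // expr0z subrr mul0r.
  have -> : m.+1%:Z - 1 = m by lia.
  rewrite !qfac_invE qfacS invfM mulrCA mulfV ?mulr1 //.
  exact: onemX_neq0.
by rewrite !qfac_inv_lt0 ?mulr0 //; lia.
Qed.

Lemma qfac_invS (n : nat) : qfinv n = (1 - q ^+ n.+1) * qfinv n.+1.
Proof. by rewrite -[q ^+ _]/(q ^ n.+1%:Z) -qfac_invB1; congr qfinv; lia. Qed.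

Lemma qbinomE (A : nat) (B : int) : qbinom q A B = qfac q A * qfinv B * qfinv (A%:Z - B).
Proof.
rewrite /qbinom; case: ifP => [/andP[]|].
  case: B => // b _ le_bA; have -> : A%:Z - b%:Z = (A - b)%N by lia.
  by rewrite !qfac_invE !absz_nat invfM mulrA.
have [B_lt0 _|B_ge0 /= /negbT] := ltrP B 0; first by rewrite qfac_inv_lt0 ?mulr0 ?mul0r.
by rewrite -ltNge => lt_AB; rewrite [qfinv (A%:Z - B)]qfac_inv_lt0 ?mulr0 //; lia.
Qed.

End QFactorials.

Section BaileyLemma.
Variables (R : numFieldType) (q : R).
Hypothesis q_not_root1 : forall k : nat, (0 < k)%N -> q ^+ k != 1.

Local Notation qfinv := (qfac_inv q).

(* The limit rho_1, rho_2 -> oo of the q-Pfaff-Saalschutz sum. *)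
Definition saalschutz_sum (m c : nat) : R :=
  \sum_(k < m.+1) q ^+ (k * k + c * k) * qfinv k * qfinv (m%:Z - k%:Z) * qfinv (c + k)%N.

Lemma saalschutz_sumS m c :
  (1 - q ^+ m.+1) * saalschutz_sum m.+1 c = saalschutz_sum m c.+1.
Proof.
(* Split 1 - q^(m+1) = (1 - q^k) + q^k (1 - q^(m+1-k)) in the k-th term; the left pieces,
   shifted by one, recombine termwise with the right pieces. *)
pose lpart (k : nat) := q ^+ (k * k + c * k) * qfinv (k%:Z - 1) * qfinv (m.+1%:Z - k%:Z)
  * qfinv (c + k)%N.
pose rpart (k : nat) := q ^+ (k * k + c.+1 * k) * qfinv k * qfinv (m%:Z - k%:Z) * qfinv (c + k)%N.
have split_term (k : 'I_m.+2) : (1 - q ^+ m.+1) * (q ^+ (k * k + c * k) * qfinv k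
    * qfinv (m.+1%:Z - k%:Z) * qfinv (c + k)%N) = lpart k + rpart k.
  have le_km : (k <= m.+1)%N by rewrite -ltnS.
  rewrite /lpart /rpart; have -> : m.+1%:Z - k%:Z = (m.+1 - k)%N by lia.
  have -> : m%:Z - k%:Z = (m.+1 - k)%N%:Z - 1 by lia.
  rewrite !qfac_invB1 // mulSn addnCA [q ^+ (k + _)]exprD.
  have <- : q ^+ k * q ^+ (m.+1 - k) = q ^+ m.+1 by rewrite -exprD subnKC.
  by rewrite -[q ^ k%:Z]/(q ^+ k) -[q ^ (m.+1 - k)%N%:Z]/(q ^+ (m.+1 - k)); ring.
rewrite /saalschutz_sum mulr_sumr (eq_bigr _ (fun k _ => split_term k)) big_split /=.
rewrite [X in X + _]big_ord_recl [X in _ + X]big_ord_recr /= /lpart /rpart.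
rewrite [qfinv (0%N%:Z - 1)]qfac_inv_lt0 // [qfinv (m%:Z - m.+1%:Z)]qfac_inv_lt0; last by lia.
rewrite !(mulr0, mul0r) add0r addr0 -big_split /=; apply: eq_bigr => k _.
rewrite /bump /= add1n (qfac_invS q_not_root1 (c + k)) addnS.
have -> : k.+1%:Z - 1 = k by lia.
have -> : m.+1%:Z - k.+1%:Z = m%:Z - k%:Z by lia.
have -> : (k.+1 * k.+1 + c * k.+1 = (k * k + c.+1 * k) + (c + k).+1)%N by lia.
by rewrite exprD addSn; ring.
Qed.

Lemma saalschutz_sumE m c : saalschutz_sum m c = qfinv m * qfinv (c + m)%N.
Proof.
elim: m c => [|m IHm] c.
  by rewrite /saalschutz_sum big_ord1 /= subrr !qfac_inv0 !mulr1 !muln0 !addn0 expr0 mul1r.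
apply: (mulfI (onemX_neq0 q_not_root1 (ltn0Sn m))); rewrite saalschutz_sumS IHm.
by rewrite (qfac_invS q_not_root1 m) addSnnS; ring.
Qed.

(* Bailey pairs relative to a = q^c, rescaled by (q)_c so that (aq;q)_(n+r) becomes
   (q)_(n+r+c). *)
Definition bailey_pair (c : nat) (alpha beta : nat -> R) : Prop :=
  forall n, beta n = \sum_(r < n.+1) alpha r * qfinv (n%:Z - r%:Z) * qfinv (n + r + c)%N.

Definition bailey_step (c : nat) (beta : nat -> R) (n : nat) : R :=
  \sum_(k < n.+1) q ^+ (k * k + c * k) * qfinv (n%:Z - k%:Z) * beta k.

Lemma bailey_lemma c alpha beta : bailey_pair c alpha beta ->
  bailey_pair c (fun r => q ^+ (r * r + c * r) * alpha r) (bailey_step c beta).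
Proof.
move=> pair_ab n; rewrite /bailey_step.
have beta_wide (k : 'I_n.+1) :
    beta k = \sum_(r < n.+1) alpha r * qfinv (k%:Z - r%:Z) * qfinv (k + r + c)%N.
  pose F r := alpha r * qfinv (k%:Z - r%:Z) * qfinv (k + r + c)%N.
  rewrite pair_ab (sum_ord_vanishing_tail (F := F) (ltn_ord k)) // => r /andP[lt_kr _].
  by rewrite /F qfac_inv_lt0 ?mulr0 ?mul0r //; lia.
under eq_bigr => k _ do rewrite beta_wide mulr_sumr.
rewrite exchange_big /=; apply: eq_bigr => r _.
pose G k := q ^+ (k * k + c * k) * qfinv (n%:Z - k%:Z)
  * (alpha r * qfinv (k%:Z - r%:Z) * qfinv (k + r + c)%N).
rewrite (sum_ord_vanishing_head (F := G) (ltnW (ltn_ord r))); last first.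
  by move=> k lt_kr; rewrite /G [qfinv (k%:Z - r%:Z)]qfac_inv_lt0 ?(mulr0, mul0r) //; lia.
rewrite subSn; last by rewrite -ltnS.
rewrite -[RHS]mulrA.
have -> : qfinv (n%:Z - r%:Z) * qfinv (n + r + c)%N = saalschutz_sum (n - r) (2 * r + c).
  rewrite saalschutz_sumE; congr (qfinv _ * qfinv _); have := ltn_ord r; lia.
rewrite mulr_sumr; apply: eq_bigr => i _; rewrite /G.
have -> : (i + r)%N%:Z - r%:Z = i by lia.
have -> : n%:Z - (i + r)%N%:Z = (n - r)%N%:Z - i%:Z by have := ltn_ord r; lia.
have -> : (i + r + r + c = 2 * r + c + i)%N by lia.
have -> : ((i + r) * (i + r) + c * (i + r) = (r * r + c * r) + (i * i + (2 * r + c) * i))%N.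
  by lia.
by rewrite exprD; ring.
Qed.

Lemma bailey_chain c alpha beta v : bailey_pair c alpha beta ->
  bailey_pair c (fun r => q ^+ (v * (r * r + c * r)) * alpha r) (iter v (bailey_step c) beta).
Proof.
move=> pair_ab; elim: v => [|v /bailey_lemma IHv] n /=.
  by rewrite pair_ab; apply: eq_bigr => r _; rewrite mul0n expr0 mul1r.
by rewrite IHv; apply: eq_bigr => r _; rewrite mulSn [q ^+ (_ + v * _)]exprD -!mulrA.
Qed.

End BaileyLemma.

Lemma leg3_nat (R : numFieldType) (n : nat) :
  leg3 R n = if (n %% 3 == 1)%N then 1 else if (n %% 3 == 2)%N then -1 else 0.
Proof. by rewrite /leg3 modz_nat. Qed.

Lemma leg3N (R : numFieldType) (j : int) : leg3 R (- j) = - leg3 R j.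
Proof.
rewrite /leg3 -modzNm.
move: (modz_ge0 j (isT : 3 != 0 :> int)) (ltz_pmod j (isT : 0 < 3 :> int)).
by case: (j %% 3)%Z => [[|[|[|r]]]|r] //=; rewrite ?oppr0 ?opprK.
Qed.

Definition base_exp (j : int) : int := ((j * j - 3 * j) %/ 2)%Z + 1.

Lemma base_expD3 j : base_exp (j + 3) = base_exp j + 3 * j.
Proof.
rewrite /base_exp (_ : (j + 3) * (j + 3) - 3 * (j + 3) = 3 * j * 2 + (j * j - 3 * j)).
  by rewrite divzMDl //; ring.
by ring.
Qed.

Lemma base_expN j : base_exp (- j) = base_exp j + 3 * j.
Proof.
rewrite /base_exp (_ : - j * - j - 3 * - j = 3 * j * 2 + (j * j - 3 * j)).
  by rewrite divzMDl //; ring.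
by ring.
Qed.

Lemma rhs_exp_base (v : nat) (j : int) :
  (((2 * v + 1)%:Z * j ^+ 2 - 3 * j) %/ 2)%Z - (v%:Z - 1) = base_exp j + v%:Z * (j * j - 1).
Proof.
rewrite /base_exp (_ : (2 * v + 1)%:Z * j ^+ 2 - 3 * j = v%:Z * (j * j) * 2 + (j * j - 3 * j)).
  by rewrite divzMDl //; ring.
by rewrite expr2 PoszD PoszM; ring.
Qed.

Section BaseBaileyPair.
Variables (R : numFieldType) (q : R).
Hypothesis q_not_root1 : forall k : nat, (0 < k)%N -> q ^+ k != 1.

Local Notation qfinv := (qfac_inv q).

Definition base_term (K : nat) (j : int) : R :=
  q ^ base_exp j * (1 - q ^ (3 * j)) * qfinv (K%:Z - j) * qfinv (K%:Z + j).

Lemma base_term_eq0 K j : K%:Z < `|j| -> base_term K j = 0.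
Proof.
rewrite /base_term; case: (lerP 0 j) => [j_ge0|j_lt0] lt_Kj.
  rewrite [qfinv (K%:Z - j)]qfac_inv_lt0 ?(mulr0, mul0r) //.
  by move: lt_Kj; rewrite ger0_norm //; lia.
by rewrite [qfinv (K%:Z + j)]qfac_inv_lt0 ?mulr0 //; move: lt_Kj; rewrite ltr0_norm //; lia.
Qed.

(* [base_sum K] is the sum of [base_term K j] over all j = 1 (mod 3); only |j| <= K
   contributes. *)
Definition base_summand (K k : nat) : R :=
  base_term K (3 * k + 1)%N + base_term K (- (3 * k + 2)%N%:Z).

Definition base_sum (K : nat) : R := \sum_(k < K.+1) base_summand K k.

Lemma base_sum_widen K n : (K < n)%N -> \sum_(k < n) base_summand K k = base_sum K.
Proof.
move=> lt_Kn; rewrite (sum_ord_vanishing_tail lt_Kn) // => k /andP[lt_Kk _].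
by rewrite /base_summand !base_term_eq0 ?addr0 // ?normrN; lia.
Qed.

Hypothesis q_neq0 : q != 0.

Lemma qfac_invB3 (e : int) :
  qfinv (e - 3) = (1 - q ^ e / q ^+ 2) * (1 - q ^ e / q) * (1 - q ^ e) * qfinv e.
Proof.
rewrite (_ : e - 3 = e - 1 - 1 - 1); last by lia.
rewrite !qfac_invB1 // !expfzDr // -!invr_expz expr1z.
by field.
Qed.

Lemma base_termN K j : base_term K (- j) = - base_term K j.
Proof.
rewrite /base_term base_expN expfzDr // opprK mulrN -invr_expz.
have qj3_neq0 : q ^ (3 * j) != 0 by apply: expfz_neq0.
by field.
Qed.

Lemma base_sum_leg3 K : \sum_(r < K) leg3 R r.+1 * base_term K r.+1 = base_sum K.
Proof.
pose F (r : nat) := leg3 R r.+1 * base_term K r.+1.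
rewrite -(sum_ord_vanishing_tail (F := F) (_ : K <= 3 * K.+1)%N); last 2 first.
- by lia.
- by move=> r /andP[le_Kr _]; rewrite /F base_term_eq0 ?mulr0 //; lia.
rewrite sum_ord_triples /base_sum; apply: eq_bigr => k _.
rewrite /F /base_summand !leg3_nat (_ : ((3 * k).+1 %% 3 = 1)%N) 1?(_ : ((3 * k).+2 %% 3 = 2)%N)
  1?(_ : ((3 * k).+3 %% 3 = 0)%N); try lia.
by rewrite /= mul1r mul0r addr0 mulN1r -base_termN addn1 addn2.
Qed.

(* The first-order recurrence for [base_sum] and its creative-telescoping certificate. *)
Definition base_recA (y : R) : R :=
  (1 + y) * (q + y) * (1 - y) * (1 - q * y ^+ 2) * (1 - q ^+ 2 * y ^+ 2).

Definition base_recB (y : R) : R :=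
  (1 + y) * (q + y) * q * (1 - q * y) * (1 - y / q + y ^+ 2 / q ^+ 2).

Definition base_cert_poly (y x : R) : R :=
  - q ^+ 3 * y * (1 - q * y) * (1 + y) / x
  + (q * (q - 1) + (q ^+ 2 - q ^+ 3 - 1) * y + q * (1 - q ^+ 2) * y ^+ 2
     + q * (1 - q + q ^+ 3) * y ^+ 3 + q ^+ 2 * (q - 1) * y ^+ 4)
  - y * (1 - q * y) * (1 + y) * x.

Definition base_cert (K : nat) (j : int) : R :=
  q ^ base_exp j * base_cert_poly (q ^+ K) (q ^ j) * qfinv (K%:Z + 1 - j) * qfinv (K%:Z + j - 2).

Lemma base_term_telescope K j :
  base_recA (q ^+ K) * base_term K.+1 j - base_recB (q ^+ K) * base_term K j
  = base_cert K (j + 3) - base_cert K j.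
Proof.
rewrite /base_recA /base_recB /base_term /base_cert /base_cert_poly base_expD3.
rewrite [q ^ (base_exp j + _)]expfzDr // [q ^ (j + 3)]expfzDr //.
set Y := q ^+ K; set X := q ^ j; set u := K.+1%:Z - j; set w := K.+1%:Z + j.
have X_neq0 : X != 0 by apply: expfz_neq0.
have qu : q ^ u = q * Y / X by rewrite /u addrC expfzDr // -invr_expz mulrC exprSz.
have qw : q ^ w = q * Y * X by rewrite /w expfzDr // exprSz.
have -> : q ^ (3 * j) = X ^+ 3 by rewrite mulrC -exprz_exp.
rewrite (_ : K%:Z + j - 2 = w - 3) 1?(_ : K%:Z + 1 - (j + 3) = u - 3)
  1?(_ : K%:Z + (j + 3) - 2 = w) 1?(_ : K%:Z + 1 - j = u) 1?(_ : K%:Z - j = u - 1)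
  1?(_ : K%:Z + j = w - 1); try by rewrite /u /w; lia.
rewrite !qfac_invB3 !qfac_invB1 // qu qw -[q ^ 3]/(q ^+ 3).
by field; rewrite q_neq0 X_neq0.
Qed.

Lemma base_sum_rec K : base_recA (q ^+ K) * base_sum K.+1 = base_recB (q ^+ K) * base_sum K.
Proof.
pose f k := base_cert K (3 * k + 1)%N - base_cert K (1 - (3 * k)%N%:Z).
apply/eqP; rewrite -subr_eq0 -(base_sum_widen (leqW (ltnSn K))) /base_sum !mulr_sumr.
rewrite -sumrB (eq_bigr (fun k : 'I_K.+2 => f k.+1 - f k)) => [|k _].
  rewrite -(big_mkord xpredT (fun k => f k.+1 - f k)) telescope_sumr // /f /base_cert.
  rewrite [qfinv (K%:Z + 1 - _)]qfac_inv_lt0; last by lia.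
  rewrite [qfinv (K%:Z + (1 - (3 * K.+2)%N%:Z) - 2)]qfac_inv_lt0; last by lia.
  by rewrite !(mulr0, mul0r, subrr, subr0).
have tel_pos := base_term_telescope K (3 * k + 1)%N.
have tel_neg := base_term_telescope K (- (3 * k + 2)%N%:Z).
rewrite /base_summand /f (_ : (3 * k.+1 + 1)%N%:Z = (3 * k + 1)%N%:Z + 3); last by lia.
rewrite (_ : 1 - (3 * k)%N%:Z = - (3 * k + 2)%N%:Z + 3); last by lia.
rewrite (_ : 1 - (3 * k.+1)%N%:Z = - (3 * k + 2)%N%:Z); last by lia.
by rewrite !mulrDr opprD addrACA tel_pos tel_neg; ring.
Qed.

Lemma base_recA_neq0 K : base_recA (q ^+ K.+1) != 0.
Proof.
rewrite /base_recA; have -> : q + q ^+ K.+1 = q * (1 + q ^+ K) by rewrite exprS mulrDr mulr1.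
rewrite -!exprM -exprS -exprD.
by rewrite !mulf_neq0 ?oneDX_neq0 ?onemX_neq0 //; lia.
Qed.

Definition base_beta (n : nat) : R :=
  q ^+ n * (qpoch (-1) (q ^+ 3) n / qpoch (-1) q n) * (1 - q ^+ (1 + n)) * qfinv (2 * n + 2)%N.

Lemma base_sum_closed K : base_sum K.+1 = (1 - q ^+ 3) / (1 - q) * base_beta K.
Proof.
have q1_neq0 := onem_neq0 q_not_root1.
elim: K => [|K IHK].
  rewrite /base_sum big_ord_recr big_ord1 /base_summand /=.
  rewrite ![base_term 1 (- _)]base_term_eq0 ?[base_term 1 (3 * 1 + 1)%N]base_term_eq0 //.
  rewrite /base_term /base_beta /qpoch !big_ord0 (_ : base_exp _ = 0) // (_ : 1%:Z - _ = 0) //.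
  rewrite qfac_inv0 (_ : 1%:Z + _ = (2 * 0 + 2)%N) // -[q ^ (3 * _)]/(q ^+ 3).
  by field.
apply: (mulfI (base_recA_neq0 K)).
rewrite base_sum_rec IHK /base_beta /base_recA /base_recB !qpochS.
rewrite (qfac_invS q_not_root1 (2 * K + 2)) (qfac_invS q_not_root1 (2 * K + 2).+1).
set z := q ^+ K.
have -> : q ^+ K.+1 = q * z by rewrite exprS.
have -> : (q ^+ 3) ^+ K = z ^+ 3 by rewrite /z exprAC.
have -> : q ^+ (1 + K.+1) = q ^+ 2 * z by rewrite /z -exprD; congr (_ ^+ _); lia.
have -> : q ^+ (2 * K + 2).+1 = q ^+ 3 * z ^+ 2 by rewrite /z -exprM -exprD; congr (_ ^+ _); lia.
have -> : q ^+ (2 * K + 2).+2 = q ^+ 4 * z ^+ 2 by rewrite /z -exprM -exprD; congr (_ ^+ _); lia.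
rewrite (_ : (2 * K.+1 + 2 = (2 * K + 2).+2)%N); last by lia.
have z1_neq0 : 1 + z != 0 by apply: oneDX_neq0.
have pK_neq0 := qpoch_neg1_neq0 q_not_root1 K.
by field; rewrite mulN1r opprK z1_neq0 pK_neq0 q1_neq0 q_neq0.
Qed.

Definition base_alpha (r : nat) : R :=
  (1 - q) / (1 - q ^+ 3) * leg3 R r.+1 * q ^ base_exp r.+1 * (1 - q ^ (3 * r.+1%:Z)).

Lemma base_bailey_pair : bailey_pair q 2 base_alpha base_beta.
Proof.
move=> n; have q3_neq0 : 1 - q ^+ 3 != 0 by exact: onemX_neq0.
have -> : \sum_(r < n.+1) base_alpha r * qfinv (n%:Z - r%:Z) * qfinv (n + r + 2)%N
    = (1 - q) / (1 - q ^+ 3) * \sum_(r < n.+1) leg3 R r.+1 * base_term n.+1 r.+1.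
  rewrite mulr_sumr; apply: eq_bigr => r _; rewrite /base_alpha /base_term.
  rewrite (_ : n.+1%:Z - r.+1%:Z = n%:Z - r%:Z) 1?(_ : n.+1%:Z + r.+1%:Z = (n + r + 2)%N); try lia.
  by rewrite -!mulrA.
rewrite base_sum_leg3 base_sum_closed mulrA.
by field; rewrite q3_neq0 onem_neq0.
Qed.

Lemma rhs_term_pair v M r :
  rhs_term q v M.+1 r.+1 + rhs_term q v M.+1 (- r.+1%:Z)
  = (1 - q ^+ 3) / (1 - q) * qfac q (2 * M.+1)
    * (q ^+ (v * (r * r + 2 * r)) * base_alpha r * qfinv (M%:Z - r%:Z) * qfinv (M + r + 2)%N).
Proof.
rewrite /rhs_term !qbinomE !rhs_exp_base leg3N base_expN /base_alpha mulrNN.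
rewrite (_ : (2 * M.+1)%N%:Z - (M.+1%:Z + r.+1%:Z) = M%:Z - r%:Z); last by lia.
rewrite (_ : (2 * M.+1)%N%:Z - (M.+1%:Z - r.+1%:Z) = (M + r + 2)%N); last by lia.
rewrite (_ : M.+1%:Z + r.+1%:Z = (M + r + 2)%N); last by lia.
rewrite (_ : M.+1%:Z - r.+1%:Z = M%:Z - r%:Z); last by lia.
rewrite (_ : r.+1%:Z * r.+1%:Z - 1 = (r * r + 2 * r)%N); last by lia.
rewrite -PoszM !expfzDr // -[q ^ (v * (r * r + 2 * r))%N]/(q ^+ (v * (r * r + 2 * r))).
have q3_neq0 : 1 - q ^+ 3 != 0 by exact: onemX_neq0.
by field; rewrite q3_neq0 onem_neq0.
Qed.

End BaseBaileyPair.

Lemma bigN_cons v n s i : bigN v.+1 (n :: s) i.+1 = bigN v s i.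
Proof.
by rewrite /bigN -(addn1 i) -(addn1 v) big_addn addnK; apply: eq_bigr => k _; rewrite addn1.
Qed.

Lemma bigN_cons0 v n s : bigN v.+1 (n :: s) 0 = (n + bigN v s 0)%N.
Proof. by rewrite /bigN big_nat_recl. Qed.

Section MultiSum.
Variables (R : numFieldType) (q : R).
Hypothesis q_not_root1 : forall k : nat, (0 < k)%N -> q ^+ k != 1.

Local Notation qfinv := (qfac_inv q).

Definition lhs_weight (v : nat) (s : seq nat) : R :=
  let nv := nth 0%N s v.-1 in
  let e := (\sum_(i < v) (bigN v s i + 2) * bigN v s i + nv)%N in
  q ^+ e / ((\prod_(i < v.-1) qfac q (nth 0%N s i)) * qfac q (2 * nv + 2))
  * (qpoch (-1) (q ^+ 3) nv / qpoch (-1) q nv) * (1 - q ^+ (1 + nv)).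

Lemma lhs_termE v L s :
  lhs_term q v L s = lhs_weight v s * qfac q (2 * L) * qfinv (L%:Z - 1 - (bigN v s 0)%:Z).
Proof. by []. Qed.

Lemma lhs_weight1 n : lhs_weight 1 [:: n] = q ^+ (n * n + 2 * n) * base_beta q n.
Proof.
rewrite /lhs_weight /base_beta /= big_ord1 big_ord0 mul1r qfac_invE.
rewrite (_ : bigN 1 [:: n] 0 = n); last by rewrite /bigN big_nat1.
by rewrite (_ : ((n + 2) * n + n = (n * n + 2 * n) + n)%N) ?exprD; [ring | lia].
Qed.

Lemma lhs_weight_cons v n s : (0 < v)%N ->
  lhs_weight v.+1 (n :: s)
  = q ^+ ((n + bigN v s 0) * (n + bigN v s 0) + 2 * (n + bigN v s 0)) * qfinv n * lhs_weight v s.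
Proof.
case: v => [//|v] _.
rewrite /lhs_weight /= big_ord_recl [\prod_(i < v.+1) _]big_ord_recl /= bigN_cons0 qfac_invE.
under eq_bigr => i _ do rewrite /bump /= add1n bigN_cons.
set N := bigN v.+1 s 0; set e := (\sum_(i < v.+1) _)%N; set nv := nth 0%N s v.
rewrite (_ : ((n + N + 2) * (n + N) + e + nv = ((n + N) * (n + N) + 2 * (n + N)) + (e + nv))%N);
  last by lia.
rewrite exprD; field.
by rewrite qpoch_neg1_neq0 ?qfac_neq0 // andbT; apply/prodf_neq0 => i _; apply: qfac_neq0.
Qed.

Lemma sum_reindex_shift L M N : (M <= L)%N ->
  \sum_(x < L.+1) q ^+ ((x + N) * (x + N) + 2 * (x + N)) * qfinv x * qfinv (M%:Z - (x + N)%N%:Z)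
  = \sum_(n < M.+1) q ^+ (n * n + 2 * n) * qfinv (M%:Z - n%:Z) * qfinv (n%:Z - N%:Z).
Proof.
move=> le_ML; case: (leqP N M) => [le_NM | lt_MN]; last first.
  rewrite !big1 // => [n _ | x _].
    by rewrite [qfinv (n%:Z - N%:Z)]qfac_inv_lt0 ?mulr0 //; have := ltn_ord n; lia.
  by rewrite [qfinv (M%:Z - _)]qfac_inv_lt0 ?mulr0 //; lia.
pose F x := q ^+ ((x + N) * (x + N) + 2 * (x + N)) * qfinv x * qfinv (M%:Z - (x + N)%N%:Z).
pose G n := q ^+ (n * n + 2 * n) * qfinv (M%:Z - n%:Z) * qfinv (n%:Z - N%:Z).
rewrite (sum_ord_vanishing_tail (F := F) (_ : (M.+1 - N <= L.+1)%N)); last 2 first.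
- by lia.
- by move=> x /andP[lt_x _]; rewrite /F [qfinv (M%:Z - _)]qfac_inv_lt0 ?mulr0 //; lia.
rewrite (sum_ord_vanishing_head (F := G) (_ : (N <= M.+1)%N)); last 2 first.
- by lia.
- by move=> n lt_nN; rewrite /G [qfinv (n%:Z - _)]qfac_inv_lt0 ?mulr0 //; lia.
apply: eq_bigr => x _; rewrite /F /G (_ : (x + N)%N%:Z - N%:Z = x); last by lia.
by rewrite mulrAC.
Qed.

Definition lhs_multisum (v L M : nat) : R :=
  \sum_(t : v.-tuple 'I_L.+1)
    lhs_weight v (map val t) * qfinv (M%:Z - (bigN v (map val t) 0)%:Z).

Lemma lhs_sum_multisum v M :
  \sum_(t : v.-tuple 'I_M.+2) lhs_term q v M.+1 [seq val x | x <- t]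
  = qfac q (2 * M.+1) * lhs_multisum v M.+1 M.
Proof.
rewrite /lhs_multisum mulr_sumr; apply: eq_bigr => t _.
by rewrite lhs_termE mulrAC mulrC (_ : M.+1%:Z - 1 = M) //; lia.
Qed.

Lemma lhs_multisum_iter v L M : (M <= L)%N ->
  lhs_multisum v.+1 L M = iter v.+1 (bailey_step q 2) (base_beta q) M.
Proof.
elim: v M => [|v IHv] M le_ML; rewrite /lhs_multisum sum_tuple_cons /=.
  pose F (x : nat) := q ^+ (x * x + 2 * x) * base_beta q x * qfinv (M%:Z - x%:Z).
  rewrite (eq_bigr (fun x : 'I_L.+1 => F x)) => [|x _]; last first.
    by rewrite sum_tuple0 /= lhs_weight1 /bigN big_nat1.
  rewrite (sum_ord_vanishing_tail (F := F) (_ : M < L.+1)%N) // => [|x /andP[lt_Mx _]].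
    by apply: eq_bigr => x _; rewrite /F mulrAC.
  by rewrite /F [qfinv _]qfac_inv_lt0 ?mulr0 //; lia.
rewrite /= in IHv; rewrite exchange_big [RHS]/bailey_step.
under [RHS]eq_bigr => n _.
  rewrite -IHv; last by have := ltn_ord n; lia.
  rewrite /lhs_multisum mulr_sumr.
  over.
rewrite [RHS]exchange_big /=; apply: eq_bigr => t _.
set N := bigN v.+1 (map val t) 0; set W := lhs_weight v.+1 (map val t).
transitivity (W * \sum_(n < M.+1) q ^+ (n * n + 2 * n) * qfinv (M%:Z - n%:Z) * qfinv (n%:Z - N%:Z)).
  rewrite -(sum_reindex_shift N le_ML) mulr_sumr; apply: eq_bigr => x _.
  by rewrite lhs_weight_cons // bigN_cons0 -/N -/W; ring.
by rewrite mulr_sumr; apply: eq_bigr => n _; ring.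
Qed.

End MultiSum.

Theorem mainTheorem7 (R : numFieldType) (q : R)
    (hq0 : q != 0) (hq : forall k : nat, (0 < k)%N -> q ^+ k != 1)
    (v L : nat) (hv : (1 <= v)%N) :
  (1 - q ^+ 3) / (1 - q) *
    \sum_(t : v.-tuple 'I_L.+1) lhs_term q v L [seq val x | x <- t]
  = \sum_(i < (2 * L).+1) rhs_term q v L (i%:Z - L%:Z).
Proof.
case: v hv => [//|v] _; rewrite sum_centered.
have -> : rhs_term q v.+1 L 0 = 0 by rewrite /rhs_term (leg3_nat R 0) !mul0r.
rewrite add0r; case: L => [|M].
  rewrite big_ord0 big1 ?mulr0 // => t _.
  by rewrite lhs_termE [qfac_inv q _]qfac_inv_lt0 ?mulr0 //; lia.
rewrite lhs_sum_multisum.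
rewrite (lhs_multisum_iter hq) // (bailey_chain hq v.+1 (base_bailey_pair hq hq0)) !mulr_sumr.
by apply: eq_bigr => r _; rewrite (rhs_term_pair hq hq0) !mulrA.
Qed.
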